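(* Let $S$ be a Gröbner–Shirshov basis in $K\langle X;\Omega\rangle$ (with respect to a fixed monomial ordering $>$ on $\mathfrak{S}(X)$). Let $u_1,u_2\in\mathfrak{S}^\star(X)$ and $s_1,s_2\in S$ be such that $w=u_1|_{\overline{s_1}}=u_2|_{\overline{s_2}}$. Then $$u_1|_{s_1}\equiv u_2|_{s_2}\ \ \mathrm{mod}\,(S,w).$$
   Context: General setup. $K$ is a commutative ring with unit, $X$ a set, and $\Omega=\bigcup_{n\ge1}\Omega_n$ a set of operation symbols, $\Omega_n$ being the $n$-ary ones. For a set $A$ let $\Omega(A)=\{\delta(u_1,\dots,u_t)\mid t\ge1,\ \delta\in\Omega_t,\ u_i\in A\}$ (formal expressions). For a set $Y$, $S(Y)$ denotes the free semigroup (nonempty words) and $Y^*$ the free monoid on $Y$. Put $\mathfrak{S}_0=S(X)$ and $\mathfrak{S}_n=S(X\cup\Omega(\mathfrak{S}_{n-1}))$ for $n\ge1$; then $\mathfrak{S}_0\subset\mathfrak{S}_1\subset\cdots$ and $\mathfrak{S}(X)=\bigcup_{n\ge0}\mathfrak{S}_n$ (the $\Omega$-words). $K\langle X;\Omega\rangle$ is the free $K$-module with basis $\mathfrak{S}(X)$, with associative multiplication given by concatenation and each $\delta\in\Omega_n$ extended $K$-multilinearly; it is the free associative algebra with multiple linear operators $\Omega$ on $X$; its elements are $\Omega$-polynomials. The prime $\Omega$-words are the elements of $X\cup\Omega(\mathfrak{S}(X))$; each $u\in\mathfrak{S}(X)$ is uniquely a product $u_1\cdots u_n$ of prime $\Omega$-words,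 and $bre(u)=n$. For a symbol $\star\notin X$, $\mathfrak{S}^\star(X)$ is the set of elements of $\mathfrak{S}(X\cup\{\star\})$ containing exactly one occurrence of $\star$; for $u\in\mathfrak{S}^\star(X)$ and an $\Omega$-polynomial $s$, $u|_s$ denotes the result of replacing $\star$ by $s$ (extended linearly in $s$). A monomial ordering is a well ordering $>$ on $\mathfrak{S}(X)$ such that $w>v$ implies $u|_w>u|_v$ for all $u\in\mathfrak{S}^\star(X)$. For nonzero $f$, $\bar f$ is its largest $\Omega$-word; $f$ is monic if the coefficient of $\bar f$ is $1$. The ideal $Id(S)$ generated by a set $S$ is the $K$-span of all $u|_s$ with $u\in\mathfrak{S}^\star(X)$, $s\in S$, and $K\langle X;\Omega|S\rangle=K\langle X;\Omega\rangle/Id(S)$. For monic $f,g$: (I) if $w=\bar f a=b\bar g$ for some $a,b\in\mathfrak{S}(X)$ with $bre(w)<bre(\bar f)+bre(\bar g)$, then $(f,g)_w=fa-bg$ is an intersection composition; (II) if $w=\bar f=u|_{\bar g}$ for some $u\in\mathfrak{S}^\star(X)$, then $(f,g)_w=f-u|_g$ is an including composition. For a set $S$ of monic $\Omega$-polynomials, an $\Omega$-word $w$, and $\Omega$-polynomials $p,q$, we write $p\equiv q\ \mathrm{mod}(S,w)$ if $p-q=\sum_i\alpha_iu_i|_{s_i}$ with $\alpha_i\in K$, $u_i\in\mathfrak{S}^\star(X)$, $s_i\in S$ and $u_i|_{\overline{s_i}}<w$ for all $i$. $S$ is a Gröbner–Shirshov basis if every composition $(f,g)_w$ with $f,g\in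 S$ satisfies $(f,g)_w\equiv0\ \mathrm{mod}(S,w)$. *)

From HB Require Import structures.
From mathcomp Require Import all_boot all_order all_algebra.
Set Implicit Arguments. Unset Strict Implicit. Unset Printing Implicit Defensive.
Import GRing.Theory.

(* A prime word is a letter or delta(u_1,...,u_t) with u_i Omega-words;     *)
(* an Omega-word is a (nonempty, see wf_word) sequence of prime words.       *)
Inductive oprim (O A : Type) : Type :=
  | PX of A
  | PO of O & seq (seq (oprim O A)).
Arguments PX {O A} a.
Arguments PO {O A} d args.

Notation oword O A := (seq (oprim O A)).

Definition allP (T : Type) (Q : T -> Prop) (s : seq T) : Prop :=
  foldr (fun x acc => Q x /\ acc) True s.

Section PrimInd.
Variables (O A : Type) (P : oprim O A -> Prop).
Hypothesis HX : forall a, P (PX a).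
Hypothesis HO : forall d args, allP (allP P) args -> P (PO d args).
Fixpoint oprim_ind' (p : oprim O A) : P p :=
  match p return P p with
  | PX a => HX a
  | PO d args => HO d
      ((fix F (s : seq (seq (oprim O A))) : allP (allP P) s :=
          match s return allP (allP P) s with
          | [::] => I
          | w :: s' => conj
              ((fix G (v : seq (oprim O A)) : allP P v :=
                  match v return allP P v with
                  | [::] => I
                  | q :: v' => conj (oprim_ind' q) (G v')
                  end) w)
              (F s')
          end) args)
  end.
End PrimInd.

Fixpoint seqb (T : Type) (e : T -> T -> bool) (s t : seq T) : bool :=
  match s, t with
  | [::], [::] => true
  | x :: s', y :: t' => e x y && seqb e s' t'
  | _, _ => false
  end.

Lemma seqb_iff (T : Type) (e : T -> T -> bool) (s : seq T) :
  allP (fun x => forall y, e x y <-> x = y) s ->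
  forall t, seqb e s t <-> s = t.
Proof.
elim: s => [|x s IH] /= H [|y t] /=; try by split.
case: H => Hx Hs; split.
  by case/andP => /Hx -> /(IH Hs t) ->.
by case=> /Hx -> /(IH Hs t) ->.
Qed.

Section PrimEq.
Variables (O A : eqType).
Fixpoint oprim_eqb (p q : oprim O A) {struct p} : bool :=
  match p, q with
  | PX a, PX b => a == b
  | PO d s, PO e t => (d == e) && seqb (seqb oprim_eqb) s t
  | _, _ => false
  end.

Lemma oprim_eqb_iff (p q : oprim O A) : oprim_eqb p q <-> p = q.
Proof.
elim/oprim_ind': p q => [a|d s IH] [b|e t] /=; try by split.
  by split=> [/eqP ->|[->]].
have H : allP (fun x => forall y, seqb oprim_eqb x y <-> x = y) s.
  elim: s IH {t} => [|w s IHs] //= [Hw Hs]; split; last exact: IHs.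
  exact: seqb_iff.
split; first by case/andP => /eqP -> /(seqb_iff H) ->.
by case=> -> <-; rewrite eqxx /=; apply/(seqb_iff H).
Qed.

Lemma oprim_eqP : Equality.axiom oprim_eqb.
Proof. by move=> p q; apply: (iffP idP) => /oprim_eqb_iff. Qed.

HB.instance Definition _ := hasDecEq.Build (oprim O A) oprim_eqP.
End PrimEq.

(* Well-formedness: arities (ar d = n means d is in Omega_n) and           *)
(* nonemptiness of words.  The Omega-words S(X) are the wf_word's.          *)
Section Words.
Variables (O : eqType) (ar : O -> nat).

Fixpoint wf_prim (A : Type) (p : oprim O A) : bool :=
  match p with
  | PX _ => true
  | PO d args =>
      (size args == ar d) && all (fun w => (~~ nilp w) && all (@wf_prim A) w) args
  end.

Definition wf_word (A : Type) (w : oword O A) : bool :=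
  (~~ nilp w) && all (@wf_prim A) w.

Variable X : eqType.

(* number of occurrences of the star (encoded as the letter None) *)
Fixpoint pstars (p : oprim O (option X)) : nat :=
  match p with
  | PX None => 1
  | PX (Some _) => 0
  | PO _ args => sumn (map (fun w => sumn (map pstars w)) args)
  end.

(* u is an element of S^star(X): an Omega-word on X + {star} with exactly
   one occurrence of star *)
Definition is_star_word (u : oword O (option X)) : bool :=
  wf_word u && (sumn (map pstars u) == 1%N).

(* u|_s : replace star by the Omega-word s *)
Fixpoint psubst (p : oprim O (option X)) (s : oword O X) : oword O X :=
  match p with
  | PX (Some x) => [:: PX x]
  | PX None => s
  | PO d args => [:: PO d (map (fun w => flatten (map (fun q => psubst q s) w)) args)]
  end.

Definition wsubst (u : oword O (option X)) (s : oword O X) : oword O X :=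
  flatten (map (fun q => psubst q s) u).

(* A monomial ordering: lt v w means w > v; a well ordering on S(X)
   compatible with all contexts u in S^star(X). *)
Definition monomial_order (lt : oword O X -> oword O X -> Prop) : Prop :=
  [/\ (forall w, wf_word w -> ~ lt w w),
      (forall u v w, wf_word u -> wf_word v -> wf_word w ->
          lt u v -> lt v w -> lt u w),
      (forall v w, wf_word v -> wf_word w -> [\/ v = w, lt v w | lt w v]),
      (forall P : oword O X -> Prop, (exists w, wf_word w /\ P w) ->
          exists m, [/\ wf_word m, P m &
                        forall w, wf_word w -> P w -> ~ lt w m])
    & (forall u v w, is_star_word u -> wf_word v -> wf_word w ->
          lt v w -> lt (wsubst u v) (wsubst u w))].

(* Omega-polynomials: formal K-linear combinations of Omega-words, given    *)
(* by a representing list of (coefficient, word) pairs; two representatives *)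
(* denote the same element iff they have the same coefficients (peq).      *)
Variable K : comPzRingType.

Definition opoly := seq (K * oword O X).

Local Open Scope ring_scope.

Definition ocoef (f : opoly) (w : oword O X) : K := \sum_(c <- f | c.2 == w) c.1.

Definition wf_poly (f : opoly) : bool := all (fun c => wf_word c.2) f.

Definition peq (f g : opoly) : Prop := forall w, ocoef f w = ocoef g w.

Definition psub (f g : opoly) : opoly := f ++ [seq (- c.1, c.2) | c <- g].
Definition pscale (a : K) (f : opoly) : opoly := [seq (a * c.1, c.2) | c <- f].
(* u|_f, extended linearly in f *)
Definition plsubst (u : oword O (option X)) (f : opoly) : opoly :=
  [seq (c.1, wsubst u c.2) | c <- f].
Definition pmulr (f : opoly) (a : oword O X) : opoly := [seq (c.1, c.2 ++ a) | c <- f].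
Definition pmull (b : oword O X) (f : opoly) : opoly := [seq (c.1, b ++ c.2) | c <- f].

Variable lt : oword O X -> oword O X -> Prop.

(* w is the leading Omega-word \bar f of f (f nonzero) *)
Definition is_lead (f : opoly) (w : oword O X) : Prop :=
  ocoef f w != 0 /\ forall v, ocoef f v != 0 -> v = w \/ lt v w.

Definition omonic (f : opoly) : Prop :=
  exists w, is_lead f w /\ ocoef f w = 1.

Definition cong_mod (S : opoly -> Prop) (w : oword O X) (p q : opoly) : Prop :=
  exists l : seq (K * oword O (option X) * opoly),
    (forall t, t \in l ->
       [/\ is_star_word t.1.2, S t.2 &
           exists ws, is_lead t.2 ws /\ lt (wsubst t.1.2 ws) w])
    /\ peq (psub p q) (flatten [seq pscale t.1.1 (plsubst t.1.2 t.2) | t <- l]).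

Definition intersection_comp (f g : opoly) (w : oword O X) (h : opoly) : Prop :=
  exists a b wf wg,
    [/\ is_lead f wf, is_lead g wg, wf_word a & wf_word b] /\
    [/\ w = wf ++ a, w = b ++ wg,
        (size w < size wf + size wg)%N & h = psub (pmulr f a) (pmull b g)].

Definition including_comp (f g : opoly) (w : oword O X) (h : opoly) : Prop :=
  exists u wf wg,
    [/\ is_lead f wf, is_lead g wg & is_star_word u] /\
    [/\ w = wf, w = wsubst u wg & h = psub f (plsubst u g)].

Definition GSbasis (S : opoly -> Prop) : Prop :=
  forall f g w h, S f -> S g ->
    intersection_comp f g w h \/ including_comp f g w h ->
    cong_mod S w h [::].

End Words.

From Pilot Require Import Defs.
From HB Require Import structures.
From mathcomp Require Import all_boot all_order all_algebra.
Set Implicit Arguments. Unset Strict Implicit. Unset Printing Implicit Defensive.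
Import GRing.Theory.

(* Every u in S^star(X) is the image [toStar k] of an
      explicit context k : ctx, a path from the top-level word down to the
      star, so that u|_x = fill k x.  A polynomial f is determined (up to [peq]) by the values
      [peval f g] = sum_c c.1 * g c.2 for all g : words -> K; this turns
      every congruence into an identity of K-valued sums, and a monic f with
      leading word ws expands as g ws + (terms below ws).
   3. The three classical cases, each giving a congruence mod (S, w):
      disjoint occurrences (a purely algebraic cancellation), inclusion and
      proper intersection (the Groebner-Shirshov hypothesis), and the fact
      that a congruence survives being put inside a context.
   4. Compare the two paths k1, k2 by induction on k1.  If one occurrence is
      at top level, the two top-level cores are separate, nested or properly
      overlapping.  If both lie inside prime words, these are either separate
      or the same prime delta(..); then the stars lie in different arguments
      (separate again) or in the same one, where induction applies. *)

Section StarContexts.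
Variables (O X : eqType) (ar : O -> nat).

Notation word := (oword O X).
Notation wf_letters := (all (@wf_prim O ar _)).

Fixpoint liftp (p : oprim O X) : oprim O (option X) :=
  match p with
  | PX x => PX (Some x)
  | PO d args => PO d (map (map liftp) args)
  end.

Lemma psubst_lift (p : oprim O X) (s : word) : psubst (liftp p) s = [:: p].
Proof.
elim/oprim_ind': p => [a|d args IH] //=.
congr [:: PO d _]; elim: args IH => //= w args IHa [Hw /IHa ->]; congr (_ :: _).
by elim: w Hw => //= q w IHw [-> /IHw ->].
Qed.

Lemma wsubst_lift (l s : word) : wsubst (map liftp l) s = l.
Proof. by elim: l => //= p l IH; rewrite /wsubst /= psubst_lift /= -/(wsubst _ _) IH. Qed.

Lemma wsubst_cat (u v : oword O (option X)) (s : word) :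
  wsubst (u ++ v) s = wsubst u s ++ wsubst v s.
Proof. by rewrite /wsubst map_cat flatten_cat. Qed.

Lemma pstars_lift (p : oprim O X) : pstars (liftp p) = 0%N.
Proof.
elim/oprim_ind': p => [a|d args IH] //=.
elim: args IH => //= w args IHa [Hw /IHa ->]; rewrite addn0.
by elim: w Hw => //= q w IHw [-> /IHw ->].
Qed.

Lemma stars_lift (l : word) : sumn (map (@pstars O X) (map liftp l)) = 0%N.
Proof. by elim: l => //= p l ->; rewrite pstars_lift. Qed.

Lemma wf_lift (p : oprim O X) : wf_prim ar (liftp p) = wf_prim ar p.
Proof.
elim/oprim_ind': p => [a|d args IH] //=.
rewrite size_map; congr (_ && _).
elim: args IH => //= w args IHa [Hw /IHa ->]; congr (_ && _).
rewrite /nilp size_map; congr (_ && _).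
by elim: w Hw => //= q w IHw [-> /IHw ->].
Qed.

Lemma all_wf_lift (l : word) : wf_letters (map liftp l) = wf_letters l.
Proof. by elim: l => //= p l ->; rewrite wf_lift. Qed.

(* A context: either l * r (star at top level, between l and r), or
   l delta(la.., k, ..ra) r (star inside an argument of an operation). *)
Inductive ctx :=
  | CTop of word & word
  | CDeep of word & word & O & seq word & ctx & seq word.

Fixpoint fill (k : ctx) (x : word) : word :=
  match k with
  | CTop l r => l ++ x ++ r
  | CDeep l r d la k' ra => l ++ [:: PO d (la ++ fill k' x :: ra)] ++ r
  end.

Definition core (k : ctx) (x : word) : word :=
  match k with
  | CTop _ _ => x
  | CDeep _ _ d la k' ra => [:: PO d (la ++ fill k' x :: ra)]
  end.
Definition cl (k : ctx) : word := match k with CTop l _ => l | CDeep l _ _ _ _ _ => l end.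
Definition cr (k : ctx) : word := match k with CTop _ r => r | CDeep _ r _ _ _ _ => r end.
Definition setLR (k : ctx) (l r : word) : ctx :=
  match k with
  | CTop _ _ => CTop l r
  | CDeep _ _ d la k' ra => CDeep l r d la k' ra
  end.

Lemma fill_core k x : fill k x = cl k ++ core k x ++ cr k.
Proof. by case: k. Qed.
Lemma fill_setLR k l r x : fill (setLR k l r) x = l ++ core k x ++ r.
Proof. by case: k. Qed.
Lemma setLR_id k : setLR k (cl k) (cr k) = k.
Proof. by case: k. Qed.
Lemma setLR_setLR k l r l' r' : setLR (setLR k l r) l' r' = setLR k l' r'.
Proof. by case: k. Qed.
Lemma cl_setLR k l r : cl (setLR k l r) = l. Proof. by case: k. Qed.
Lemma cr_setLR k l r : cr (setLR k l r) = r. Proof. by case: k. Qed.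

Fixpoint toStar (k : ctx) : oword O (option X) :=
  match k with
  | CTop l r => map liftp l ++ [:: PX None] ++ map liftp r
  | CDeep l r d la k' ra =>
      map liftp l ++ [:: PO d (map (map liftp) la ++ toStar k' :: map (map liftp) ra)]
        ++ map liftp r
  end.

Definition starcore (k : ctx) : oword O (option X) :=
  match k with
  | CTop _ _ => [:: PX None]
  | CDeep _ _ d la k' ra => [:: PO d (map (map liftp) la ++ toStar k' :: map (map liftp) ra)]
  end.

Lemma toStar_core k : toStar k = map liftp (cl k) ++ starcore k ++ map liftp (cr k).
Proof. by case: k. Qed.
Lemma toStar_setLR k l r : toStar (setLR k l r) = map liftp l ++ starcore k ++ map liftp r.
Proof. by case: k. Qed.

Lemma wsubst_toStar k x : wsubst (toStar k) x = fill k x.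
Proof.
have lifted (s : seq word) : map (fun w => wsubst (map liftp w) x) s = s.
  by elim: s => //= w s ->; rewrite wsubst_lift.
elim: k => [l r|l r d la k IH ra] /=; rewrite wsubst_cat wsubst_lift /wsubst /=.
  by rewrite -/(wsubst _ _) wsubst_lift.
rewrite -/(wsubst _ _) wsubst_lift map_cat /= -/(wsubst _ _) IH -!map_comp.
by rewrite !lifted.
Qed.

Fixpoint ccomp (k k' : ctx) : ctx :=
  match k with
  | CTop l r => setLR k' (l ++ cl k') (cr k' ++ r)
  | CDeep l r d la k0 ra => CDeep l r d la (ccomp k0 k') ra
  end.

Lemma fill_ccomp k k' x : fill (ccomp k k') x = fill k (fill k' x).
Proof.
elim: k => [l r|l r d la k IH ra] /=; last by rewrite IH.
by rewrite fill_setLR fill_core !catA.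
Qed.

Fixpoint wf_ctx (k : ctx) : bool :=
  match k with
  | CTop l r => wf_letters l && wf_letters r
  | CDeep l r d la k' ra =>
      [&& wf_letters l, wf_letters r, (size la + size ra).+1 == ar d,
          all (@wf_word O ar _) la, all (@wf_word O ar _) ra & wf_ctx k']
  end.

Lemma wf_cl k : wf_ctx k -> wf_letters (cl k).
Proof. by case: k => [l r /andP[]|l r d la k ra /and5P[]]. Qed.
Lemma wf_cr k : wf_ctx k -> wf_letters (cr k).
Proof. by case: k => [l r /andP[]|l r d la k ra /and5P[]]. Qed.
Lemma wf_setLR k l r : wf_ctx k -> wf_letters l -> wf_letters r -> wf_ctx (setLR k l r).
Proof.
case: k => [l0 r0|l0 r0 d la k ra] /=; first by move=> _ -> ->.
by move=> /and5P[_ _ -> -> /andP[-> ->]] -> ->.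
Qed.

Lemma wf_fill_core k x : wf_ctx k -> wf_word ar x ->
  wf_word ar (core k x) /\ wf_word ar (fill k x).
Proof.
elim: k x => [l r|l r d la k IH ra] x /=.
  move=> /andP[Hl Hr] Hx; split=> //; move: Hx; rewrite /wf_word /nilp !all_cat Hl Hr /=.
  by rewrite !size_cat; case/andP=> Hn ->; rewrite andbT; case: (size x) Hn => //= n; rewrite addnS.
move=> /and5P[Hl Hr Hs Hla /andP[Hra Hk]] Hx; have [_ Hf] := IH x Hk Hx.
have Hc : wf_word ar [:: PO d (la ++ fill k x :: ra)].
  rewrite /wf_word /= andbT size_cat /= addnS -(eqP Hs) eqxx /= all_cat /= Hla Hra.
  by move: Hf; rewrite /wf_word => ->.
split=> //; rewrite /wf_word /nilp size_cat /= addnS /= all_cat Hl /= Hr andbT.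
by move: Hc; rewrite /wf_word /= andbT.
Qed.

Lemma wf_ccomp k k' : wf_ctx k -> wf_ctx k' -> wf_ctx (ccomp k k').
Proof.
elim: k => [l r|l r d la k IH ra] /=.
  by move=> /andP[Hl Hr] Hk'; apply: wf_setLR => //; rewrite all_cat ?Hl ?Hr ?wf_cl ?wf_cr.
by move=> /and5P[-> -> -> -> /andP[-> Hk]] Hk' /=; apply: IH.
Qed.

Lemma star_toStar k : wf_ctx k -> is_star_word ar (toStar k).
Proof.
have no_stars (s : seq word) :
  sumn [seq sumn [seq pstars i | i <- w] | w <- map (map liftp) s] = 0%N.
  by elim: s => //= w s ->; rewrite stars_lift.
have wf_args (s : seq word) : all (@wf_word O ar _) s ->
  all (fun w => ~~ nilp w && wf_letters w) (map (map liftp) s).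
  by elim: s => //= w s IHs /andP[Hw /IHs ->]; rewrite andbT /nilp size_map all_wf_lift.
rewrite /is_star_word; elim: k => [l r|l r d la k IH ra] /=.
  move=> /andP[Hl Hr]; rewrite /wf_word /nilp !map_cat !sumn_cat !stars_lift size_cat /= addnS /=.
  by rewrite !all_cat /= !all_wf_lift Hl Hr stars_lift.
move=> /and5P[Hl Hr Hs Hla /andP[Hra Hk]]; have /andP[Hwk /eqP Hsk] := IH Hk.
rewrite /wf_word /nilp !map_cat !sumn_cat !stars_lift size_cat /= addnS /=.
rewrite !all_cat /= !all_wf_lift Hl Hr /= andbT size_cat /= !size_map addnS -(eqP Hs) eqxx /=.
rewrite !map_cat !sumn_cat /= Hsk no_stars no_stars stars_lift all_cat /= !wf_args //.
by rewrite !addn0 !add0n eqxx !andbT; move: Hwk; rewrite /wf_word.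
Qed.

Definition star_decomp (q : oprim O (option X)) : Prop :=
  wf_prim ar q ->
  (pstars q = 0%N -> exists p, q = liftp p) /\
  (pstars q = 1%N -> exists k, wf_ctx k /\ [:: q] = toStar k).

Lemma word_star_decomp (w : oword O (option X)) :
  Defs.allP star_decomp w -> wf_letters w ->
  (sumn [seq pstars i | i <- w] = 0%N -> exists v, w = map liftp v) /\
  (sumn [seq pstars i | i <- w] = 1%N -> exists k, wf_ctx k /\ w = toStar k).
Proof.
elim: w => [|q w IH] /=; first by move=> _ _; split=> // _; exists [::].
move=> [Hq Hw] /andP[wq ww]; have [IH0 IH1] := IH Hw ww; have [Hq0 Hq1] := Hq wq.
split.
  move=> /eqP; rewrite addn_eq0 => /andP[/eqP /Hq0 [p ->] /eqP /IH0 [v ->]].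
  by exists (p :: v).
case: (pstars q) Hq0 Hq1 => [|[|n]] Hq0 Hq1 /=; last by rewrite !addSn.
- rewrite add0n => /IH1 [k [wk ->]]; have [p Ep] := Hq0 erefl.
  exists (setLR k (p :: cl k) (cr k)); split.
    apply: wf_setLR => //; last exact: wf_cr.
    by rewrite /= wf_cl // andbT -wf_lift -Ep.
  by rewrite toStar_setLR toStar_core Ep.
- move=> /eqP; rewrite add1n eqSS => /eqP /IH0 [v Ev]; rewrite Ev.
  have [k [wk Ek]] := Hq1 erefl.
  have : size (toStar k) = 1%N by rewrite -Ek.
  rewrite toStar_core !size_cat !size_map.
  have -> : size (starcore k) = 1%N by case: k {Ek wk}.
  rewrite add1n addnS => /eqP; rewrite eqSS addn_eq0 !size_eq0 => /andP[/eqP El /eqP Er].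
  exists (setLR k [::] v); split; first by apply: wf_setLR => //; rewrite -all_wf_lift -Ev.
  by rewrite toStar_setLR /=; move: Ek; rewrite toStar_core El Er /= cats0 => <-.
Qed.

Lemma args_star_decomp (args : seq (oword O (option X))) :
  Defs.allP (Defs.allP star_decomp) args ->
  all (fun w => ~~ nilp w && wf_letters w) args ->
  (sumn [seq sumn [seq pstars i | i <- w] | w <- args] = 0%N ->
     exists a, args = map (map liftp) a) /\
  (sumn [seq sumn [seq pstars i | i <- w] | w <- args] = 1%N ->
     exists la k ra, [/\ args = map (map liftp) la ++ toStar k :: map (map liftp) ra,
        wf_ctx k, all (@wf_word O ar _) la & all (@wf_word O ar _) ra]).
Proof.
have wf_unlift (a : seq word) :
  all (fun w => ~~ nilp w && wf_letters w) (map (map liftp) a) -> all (@wf_word O ar _) a.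
  elim: a => //= v a IHa /andP[Hv /IHa ->].
  by rewrite andbT /wf_word; move: Hv; rewrite /nilp size_map all_wf_lift.
elim: args => [|w args IH] /=; first by move=> _ _; split=> // _; exists [::].
move=> [Hw Ha] /andP[/andP[nw ww] wa]; have [IH0 IH1] := IH Ha wa.
have [Hw0 Hw1] := word_star_decomp Hw ww.
split.
  move=> /eqP; rewrite addn_eq0 => /andP[/eqP /Hw0 [v ->] /eqP /IH0 [a ->]].
  by exists (v :: a).
case: (sumn _) Hw0 Hw1 => [|[|n]] Hw0 Hw1 //=.
- rewrite add0n => /IH1 [la [k [ra [-> wk wla wra]]]]; have [v Ev] := Hw0 erefl.
  exists (v :: la), k, ra; split => //=; rewrite ?Ev // wla andbT.
  by move: nw ww; rewrite Ev /wf_word /nilp size_map all_wf_lift => -> ->.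
- move=> /eqP; rewrite add1n eqSS => /eqP /IH0 [a Ea].
  have [k [wk Ek]] := Hw1 erefl.
  exists [::], k, a; split => //=; first by rewrite Ek Ea.
  by apply: wf_unlift; rewrite -Ea.
Qed.

Lemma prim_star_decomp q : star_decomp q.
Proof.
elim/oprim_ind': q => [[x|]|d args IH] /=.
- by move=> _; split=> // _; exists (PX x).
- by move=> _; split=> // _; exists (CTop [::] [::]).
move=> /andP[Hs Ha]; have [H0 H1] := args_star_decomp IH Ha.
split; first by move=> /H0 [a ->]; exists (PO d a).
move=> /H1 [la [k [ra [E wk wla wra]]]].
exists (CDeep [::] [::] d la k ra); split; last by rewrite /= E.
by rewrite /= wla wra wk !andbT; move: Hs; rewrite E size_cat /= !size_map addnS.
Qed.

Lemma star_ctx u : is_star_word ar u -> exists k, wf_ctx k /\ u = toStar k.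
Proof.
case/andP=> /andP[_ wu] /eqP Hs.
have all_decomp (s : oword O (option X)) : Defs.allP star_decomp s.
  by elim: s => //= q s IH; split; [exact: prim_star_decomp | exact: IH].
by have [_ H1] := word_star_decomp (all_decomp u) wu; apply: H1.
Qed.

End StarContexts.

Section LinearForms.
Local Open Scope ring_scope.
Variables (O X : eqType) (K : comPzRingType).
Notation word := (oword O X).
Notation poly := (opoly O X K).

Definition peval (f : poly) (g : word -> K) : K := \sum_(c <- f) c.1 * g c.2.

Lemma ocoefE (f : poly) z : ocoef f z = peval f (fun y => (y == z)%:R).
Proof.
rewrite /ocoef /peval big_mkcond; apply: eq_bigr => c _.
by case: eqP => _; rewrite ?mulr1 ?mulr0.
Qed.

Lemma peval_nil g : peval [::] g = 0.
Proof. by rewrite /peval big_nil. Qed.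
Lemma peval_psub f h g : peval (psub f h) g = peval f g - peval h g.
Proof.
rewrite /psub /peval big_cat big_map -sumrN; congr (_ + _).
by apply: eq_bigr => c _; rewrite mulNr.
Qed.
Lemma peval_pscale a f g : peval (pscale a f) g = a * peval f g.
Proof. by rewrite /peval big_map mulr_sumr; apply: eq_bigr => c _; rewrite mulrA. Qed.
Lemma peval_plsubst u f g : peval (plsubst u f) g = peval f (fun y => g (wsubst u y)).
Proof. by rewrite /peval big_map. Qed.
Lemma peval_pmulr f a g : peval (pmulr f a) g = peval f (fun y => g (y ++ a)).
Proof. by rewrite /peval big_map. Qed.
Lemma peval_pmull b f g : peval (pmull b f) g = peval f (fun y => g (b ++ y)).
Proof. by rewrite /peval big_map. Qed.
Lemma peval_flatten (T : Type) (F : T -> poly) l g :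
  peval (flatten (map F l)) g = \sum_(t <- l) peval (F t) g.
Proof. by rewrite /peval big_flatten /= big_map. Qed.
Lemma eq_peval f g1 g2 : g1 =1 g2 -> peval f g1 = peval f g2.
Proof. by move=> H; apply: eq_bigr => c _; rewrite H. Qed.

Lemma sum_pred1_uniq (D : seq word) c (F : word -> K) :
  uniq D -> c \in D -> \sum_(y <- D | c == y) F y = F c.
Proof.
move=> uD cD; rewrite (big_rem _ cD) eqxx big1_seq; first exact: addr0.
by move=> y /andP[/eqP <-]; rewrite mem_rem_uniqF.
Qed.

Lemma peval_coef (f : poly) g (D : seq word) : uniq D -> {subset map snd f <= D} ->
  peval f g = \sum_(y <- D) ocoef f y * g y.
Proof.
move=> uD sD; rewrite /ocoef.
under [RHS]eq_bigr do rewrite mulr_suml.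
rewrite (exchange_big_dep xpredT) //= /peval; apply: eq_big_seq => c cf.
rewrite (eq_bigr (fun _ => c.1 * g c.2)); last by move=> y /eqP ->.
by rewrite sum_pred1_uniq //; apply: sD; apply: map_f.
Qed.

Lemma ocoef_support (f : poly) y : ocoef f y != 0 -> y \in map snd f.
Proof.
apply: contraR => Hy; rewrite /ocoef big1_seq // => c /andP[/eqP Ec cf].
by case/negP: Hy; rewrite -Ec; apply: map_f.
Qed.

Lemma peqP (f h : poly) : peq f h <-> forall g, peval f g = peval h g.
Proof.
split=> [E g|E w]; last by rewrite !ocoefE E.
set D := undup (map snd (f ++ h)).
have uD : uniq D by apply: undup_uniq.
rewrite (peval_coef g uD) ?(peval_coef (f:=h) g uD).
  by apply: eq_bigr => y _; rewrite E.
all: by move=> y yf; rewrite mem_undup map_cat mem_cat yf ?orbT.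
Qed.

Definition lower_words (f : poly) (ws : word) : seq word :=
  [seq y <- undup (map snd f) | (y != ws) && (ocoef f y != 0)].

Lemma lower_wordsP f ws y :
  y \in lower_words f ws -> [/\ y \in map snd f, y != ws & ocoef f y != 0].
Proof. by rewrite mem_filter mem_undup => /andP[/andP[-> ->] ->]. Qed.

Lemma peval_monic (f : poly) ws g : ocoef f ws != 0 -> ocoef f ws = 1 ->
  peval f g = g ws + \sum_(x <- lower_words f ws) ocoef f x * g x.
Proof.
move=> H0 H1; have uD : uniq (undup (map snd f)) by apply: undup_uniq.
rewrite (peval_coef g uD); last by move=> y; rewrite mem_undup.
have wsD : ws \in undup (map snd f) by rewrite mem_undup ocoef_support.
rewrite (bigID (fun y => y == ws)) /=; congr (_ + _).
  rewrite (eq_bigl (fun y => ws == y)); last by move=> y; rewrite eq_sym.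
  by rewrite sum_pred1_uniq // H1 mul1r.
rewrite (bigID (fun y => ocoef f y != 0)) /= [X in _ + X]big1; last first.
  by move=> y /andP[_]; rewrite negbK => /eqP ->; rewrite mul0r.
by rewrite addr0 /lower_words big_filter.
Qed.

End LinearForms.

Section Congruence.
Local Open Scope ring_scope.
Variables (K : comPzRingType) (X O : eqType) (ar : O -> nat).
Variable lt : oword O X -> oword O X -> Prop.
Hypothesis Hlt : monomial_order ar lt.
Variable S : opoly O X K -> Prop.
Hypothesis HSwf : forall s, S s -> wf_poly ar s.
Hypothesis HSmon : forall s, S s -> omonic lt s.
Hypothesis HGSB : GSbasis ar lt S.

Notation word := (oword O X).
Notation poly := (opoly O X K).
Notation wf_letters := (all (@wf_prim O ar _)).
Notation cong := (cong_mod ar lt S).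

Lemma lt_irr w : wf_word ar w -> ~ lt w w.
Proof. by case: Hlt => H _ _ _ _; apply: H. Qed.
Lemma lt_trans u v w : wf_word ar u -> wf_word ar v -> wf_word ar w ->
  lt u v -> lt v w -> lt u w.
Proof. by case: Hlt => _ H _ _ _; apply: H. Qed.
Lemma lt_mon u v w : is_star_word ar u -> wf_word ar v -> wf_word ar w ->
  lt v w -> lt (wsubst u v) (wsubst u w).
Proof. by case: Hlt => _ _ _ _ H; apply: H. Qed.

Lemma word_wf s y : S s -> y \in map snd s -> wf_word ar y.
Proof. by move=> Ss /mapP [c cs ->]; move/allP: (HSwf Ss); apply. Qed.

Lemma lead_wf s ws : S s -> is_lead lt s ws -> wf_word ar ws.
Proof. by move=> Ss [H0 _]; apply: (word_wf Ss); apply: ocoef_support. Qed.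

(* The leading word is unique, so the monic normalization applies to it. *)
Lemma lead_one s ws : S s -> is_lead lt s ws -> ocoef s ws = 1.
Proof.
move=> Ss Hl; have [w' [Hl' H1]] := HSmon Ss.
suff -> : ws = w' by [].
have [H0 Hd] := Hl; have [H0' Hd'] := Hl'.
have wws := lead_wf Ss Hl; have ww' := lead_wf Ss Hl'.
case: (Hd _ H0') => [->//|lt1]; case: (Hd' _ H0) => [->//|lt2].
by case: (lt_irr wws); apply: (lt_trans wws ww' wws).
Qed.

Lemma lead_lt s ws y : S s -> is_lead lt s ws -> y \in lower_words s ws -> lt y ws.
Proof.
move=> Ss [_ Hd] /lower_wordsP [_ /negbTE Hne Hy].
by case: (Hd _ Hy) => // E; rewrite E eqxx in Hne.
Qed.

Definition terms (l : seq (K * oword O (option X) * poly)) : poly :=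
  flatten [seq pscale t.1.1 (plsubst t.1.2 t.2) | t <- l].

Definition admissible (w : word) (t : K * oword O (option X) * poly) : Prop :=
  [/\ is_star_word ar t.1.2, S t.2 &
      exists ws, is_lead lt t.2 ws /\ lt (wsubst t.1.2 ws) w].

Lemma peval_terms l g :
  peval (terms l) g = \sum_(t <- l) t.1.1 * peval t.2 (fun y => g (wsubst t.1.2 y)).
Proof.
by rewrite /terms peval_flatten; apply: eq_bigr => t _; rewrite peval_pscale peval_plsubst.
Qed.

Lemma congP w p q : cong w p q <->
  exists l, (forall t, t \in l -> admissible w t) /\
    (forall g, peval p g - peval q g = peval (terms l) g).
Proof.
split=> [[l [Hl /peqP E]]|[l [Hl E]]]; exists l; split=> //.
  by move=> g; rewrite -peval_psub E.
by apply/peqP => g; rewrite peval_psub E.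
Qed.

Lemma cong_sym w p q : cong w p q -> cong w q p.
Proof.
case/congP => l [Hl E]; apply/congP.
exists [seq (- t.1.1, t.1.2, t.2) | t <- l]; split.
  by move=> t /mapP [t0 t0l ->]; case: (Hl _ t0l).
move=> g; rewrite peval_terms big_map -[LHS]opprB E peval_terms -sumrN.
by apply: eq_bigr => t _; rewrite mulNr.
Qed.

Lemma star_in_context (k : ctx O X) u : wf_ctx ar k -> is_star_word ar u ->
  exists u', is_star_word ar u' /\ forall x, wsubst u' x = fill k (wsubst u x).
Proof.
move=> wk /star_ctx [k' [wk' ->]]; exists (toStar (ccomp k k')); split.
  by apply: star_toStar; apply: wf_ccomp.
by move=> x; rewrite !wsubst_toStar fill_ccomp.
Qed.

(* Congruences are stable under contexts: p == q mod (S, w') implies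
   k|_p == k|_q mod (S, k|_w'), by monotonicity of the ordering. *)
Lemma cong_in_context (k : ctx O X) w' p q p' q' : wf_ctx ar k -> wf_word ar w' ->
  cong w' p q ->
  (forall g, peval p' g - peval q' g =
             peval p (fun y => g (fill k y)) - peval q (fun y => g (fill k y))) ->
  cong (fill k w') p' q'.
Proof.
move=> wk ww /congP [l [Hl E]] E'; apply/congP.
suff [l' [Hl' El']] : exists l', (forall t, t \in l' -> admissible (fill k w') t) /\
   forall g, peval (terms l') g = peval (terms l) (fun y => g (fill k y)).
  by exists l'; split=> // g; rewrite E' E El'.
elim: l Hl {E} => [|t l IH] Hl.
  by exists [::]; split=> // g; rewrite /terms /= !peval_nil.
have [l' [Hl' El']] := IH (fun t' H => Hl t' (mem_behead (s := t :: l) H)).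
have [st St [ws [Hws Hltw]]] := Hl t (mem_head _ _).
have [u' [su' Eu']] := star_in_context wk st.
exists ((t.1.1, u', t.2) :: l'); split.
  move=> t'; rewrite inE => /orP [/eqP -> |]; last exact: Hl'.
  split=> //; exists ws; split=> //=; rewrite Eu' -!wsubst_toStar.
  have [k' [wk' Et]] := star_ctx st.
  apply: lt_mon => //; first exact: star_toStar.
  by rewrite Et wsubst_toStar; case: (wf_fill_core wk' (lead_wf St Hws)).
move=> g; rewrite !peval_terms !big_cons -!peval_terms El' /= peval_terms.
by congr (_ * _ + _); apply: eq_peval => y; rewrite Eu'.
Qed.

(* Disjoint occurrences: if w contains \bar s1 and \bar s2 at independent
   places, described by L (holding s2, with a hole at \bar s1's place) and
   R (holding s1, with a hole at \bar s2's place), then expanding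
   s1 = \bar s1 + r1 and s2 = \bar s2 + r2 gives
   R|_{s1} - L|_{s2} = sum r1-terms * s2 - sum r2-terms * s1,
   all of whose leading words are below w. *)
Lemma disjoint_cong s1 s2 ws1 ws2 (L R : word -> oword O (option X)) :
  S s1 -> S s2 -> is_lead lt s1 ws1 -> is_lead lt s2 ws2 ->
  (forall x, wf_word ar x -> is_star_word ar (L x)) ->
  (forall y, wf_word ar y -> is_star_word ar (R y)) ->
  (forall x y, wsubst (L x) y = wsubst (R y) x) ->
  cong (wsubst (R ws2) ws1) (plsubst (R ws2) s1) (plsubst (L ws1) s2).
Proof.
move=> S1 S2 H1 H2 HL HR C.
have w1 := lead_wf S1 H1; have w2 := lead_wf S2 H2.
have o1 := lead_one S1 H1; have o2 := lead_one S2 H2.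
have [n1 _] := H1; have [n2 _] := H2.
apply/congP; exists ([seq (ocoef s1 x, L x, s2) | x <- lower_words s1 ws1] ++
                     [seq (- ocoef s2 y, R y, s1) | y <- lower_words s2 ws2]); split.
  move=> t; rewrite mem_cat => /orP [] /mapP [x xD ->]; have [xs _ _] := lower_wordsP xD.
    have wx := word_wf S1 xs.
    split=> //=; first exact: HL.
    exists ws2; split=> //; rewrite C; apply: lt_mon => //; first exact: HR.
    exact: lead_lt S1 H1 xD.
  have wx := word_wf S2 xs.
  split=> //=; first exact: HR.
  exists ws1; split=> //; rewrite -C -[wsubst (R ws2) ws1]C; apply: lt_mon => //.
    exact: HL.
  exact: lead_lt S2 H2 xD.
move=> g; rewrite !peval_plsubst peval_terms big_cat !big_map /=.
rewrite (eq_peval s2 (fun y => congr1 g (C ws1 y))).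
under eq_bigr => x _ do rewrite (eq_peval s2 (fun y => congr1 g (C x y))).
rewrite (peval_monic _ n1 o1) (peval_monic _ n2 o2).
under eq_bigr => x _ do rewrite (peval_monic _ n2 o2) mulrDr mulr_sumr.
under [in X in _ = _ + X]eq_bigr => y _ do rewrite (peval_monic _ n1 o1) mulrDr mulr_sumr.
rewrite !big_split /= [X in _ = _ + X + _]exchange_big /=.
under [X in _ = _ + (X + _)]eq_bigr => i _ do rewrite mulNr.
rewrite sumrN.
under [X in _ = _ + (_ + X)]eq_bigr => i _ do
  (under eq_bigr => j _ do rewrite mulNr mulrCA; rewrite sumrN).
by rewrite sumrN opprD addrACA subrr add0r addrACA subrr addr0.
Qed.

Lemma wf_word_cat (a b : word) : wf_word ar a -> wf_word ar b -> wf_word ar (a ++ b).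
Proof.
rewrite /wf_word /nilp size_cat all_cat => /andP[na ->] /andP[_ ->].
by case: (size a) na.
Qed.

Lemma wf_prefix (x y : word) : wf_word ar (x ++ y) -> ~~ nilp x -> wf_word ar x.
Proof. by rewrite /wf_word all_cat => /andP[_ /andP[-> _]] ->. Qed.
Lemma wf_suffix (x y : word) : wf_word ar (x ++ y) -> ~~ nilp y -> wf_word ar y.
Proof. by rewrite /wf_word all_cat => /andP[_ /andP[_ ->]] ->. Qed.

(* Inclusion: \bar s1 = kin|_{\bar s2}; the including composition
   s1 - kin|_{s2} is trivial mod (S, \bar s1), and we put it in context k. *)
Lemma including_cong (k kin : ctx O X) s1 s2 ws1 ws2 : wf_ctx ar k -> wf_ctx ar kin ->
  S s1 -> S s2 -> is_lead lt s1 ws1 -> is_lead lt s2 ws2 -> ws1 = fill kin ws2 ->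
  cong (fill k ws1) (plsubst (toStar k) s1) (plsubst (toStar (ccomp k kin)) s2).
Proof.
move=> wk wkin S1 S2 H1 H2 E.
have Hcomp : including_comp ar lt s1 s2 ws1 (psub s1 (plsubst (toStar kin) s2)).
  exists (toStar kin), ws1, ws2; split; first by split=> //; apply: star_toStar.
  by split=> //; rewrite wsubst_toStar.
apply: (cong_in_context wk (lead_wf S1 H1) (HGSB S1 S2 (or_intror Hcomp))) => g.
rewrite !peval_plsubst peval_psub peval_nil subr0 peval_plsubst; congr (_ - _).
  by apply: eq_peval => y; rewrite wsubst_toStar.
by apply: eq_peval => y; rewrite !wsubst_toStar fill_ccomp.
Qed.

(* Proper overlap at top level: \bar s1 a = b \bar s2 with
   bre(\bar s1 a) < bre(\bar s1) + bre(\bar s2); the intersection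
   composition s1 a - b s2 is trivial, and we put it between A and F. *)
Lemma intersection_cong (A F : word) s1 s2 ws1 ws2 a b :
  wf_letters A -> wf_letters F ->
  S s1 -> S s2 -> is_lead lt s1 ws1 -> is_lead lt s2 ws2 -> wf_word ar a -> wf_word ar b ->
  ws1 ++ a = b ++ ws2 -> (size (ws1 ++ a) < size ws1 + size ws2)%N ->
  cong (A ++ (ws1 ++ a) ++ F) (plsubst (toStar (CTop A (a ++ F))) s1)
       (plsubst (toStar (CTop (A ++ b) F)) s2).
Proof.
move=> wA wF S1 S2 H1 H2 wa wb E Hs.
have Hcomp : intersection_comp ar lt s1 s2 (ws1 ++ a) (psub (pmulr s1 a) (pmull b s2)).
  by exists a, b, ws1, ws2.
have wk : wf_ctx ar (CTop A F) by rewrite /= wA wF.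
apply: (cong_in_context wk (wf_word_cat (lead_wf S1 H1) wa) (HGSB S1 S2 (or_introl Hcomp))).
move=> g; rewrite peval_nil subr0 (peval_psub (pmulr s1 a)) !peval_plsubst.
rewrite peval_pmulr peval_pmull.
by congr (_ - _); apply: eq_peval => y; rewrite wsubst_toStar /= -!catA.
Qed.

Lemma cat_split (T : eqType) (A B D E : seq T) : A ++ B = D ++ E -> (size A <= size D)%N ->
  exists m, D = A ++ m /\ B = m ++ E.
Proof.
elim: A D => [|x A IH] [|y D] //=; first by move=> ->; exists [::].
  by move=> ->; exists (y :: D).
by move=> [-> /IH H] /H [m [-> ->]]; exists m.
Qed.

Lemma cat_cons_cases (T : eqType) (A B D E : seq T) x y :
  A ++ x :: B = D ++ y :: E ->
  [\/ exists m, D = A ++ x :: m /\ B = m ++ y :: E,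
      exists m, A = D ++ y :: m /\ E = m ++ x :: B
    | [/\ A = D, x = y & B = E]].
Proof.
elim: A D => [|a A IH] [|d D] /=.
- by case=> -> ->; constructor 3.
- by case=> -> ->; constructor 1; exists D.
- by case=> -> <-; constructor 2; exists A.
case=> -> /IH [[m [-> ->]]|[m [-> ->]]|[-> -> ->]].
- by constructor 1; exists m.
- by constructor 2; exists m.
- by constructor 3.
Qed.


Lemma separate_cong (k1 k2 : ctx O X) s1 s2 ws1 ws2 m :
  wf_ctx ar k1 -> wf_ctx ar k2 -> S s1 -> S s2 -> is_lead lt s1 ws1 -> is_lead lt s2 ws2 ->
  cl k2 = cl k1 ++ core k1 ws1 ++ m -> cr k1 = m ++ core k2 ws2 ++ cr k2 ->
  cong (fill k1 ws1) (plsubst (toStar k1) s1) (plsubst (toStar k2) s2).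
Proof.
move=> wk1 wk2 S1 S2 H1 H2 El Er.
have wm : wf_letters m by move: (wf_cl wk2); rewrite El !all_cat => /and3P[].
have wcore (k : ctx O X) x : wf_ctx ar k -> wf_word ar x -> wf_letters (core k x).
  by move=> wk wx; have [/andP[]] := wf_fill_core wk wx.
have := @disjoint_cong s1 s2 ws1 ws2
  (fun x => toStar (setLR k2 (cl k1 ++ core k1 x ++ m) (cr k2)))
  (fun y => toStar (setLR k1 (cl k1) (m ++ core k2 y ++ cr k2))) S1 S2 H1 H2.
rewrite -Er -El !setLR_id wsubst_toStar; apply.
- move=> x wx; apply: star_toStar; apply: wf_setLR => //; last exact: wf_cr.
  by rewrite !all_cat wf_cl // wcore.
- move=> y wy; apply: star_toStar; apply: wf_setLR => //; first exact: wf_cl.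
  by rewrite !all_cat wm wf_cr // wcore.
- by move=> x y; rewrite !wsubst_toStar !fill_setLR -!catA.
Qed.

Lemma separate_args_cong l r d la1 (k1' : ctx O X) mid k2' ra2 s1 s2 ws1 ws2 :
  wf_ctx ar (CDeep l r d la1 k1' (mid ++ fill k2' ws2 :: ra2)) ->
  wf_ctx ar (CDeep l r d (la1 ++ fill k1' ws1 :: mid) k2' ra2) ->
  S s1 -> S s2 -> is_lead lt s1 ws1 -> is_lead lt s2 ws2 ->
  cong (fill (CDeep l r d la1 k1' (mid ++ fill k2' ws2 :: ra2)) ws1)
    (plsubst (toStar (CDeep l r d la1 k1' (mid ++ fill k2' ws2 :: ra2))) s1)
    (plsubst (toStar (CDeep l r d (la1 ++ fill k1' ws1 :: mid) k2' ra2)) s2).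
Proof.
move=> /= /and5P[wl wr ws1d wla1 /andP[wra1 wk1]] /and5P[_ _ ws2d wla2 /andP[wra2 wk2]].
move=> S1 S2 H1 H2.
have := @disjoint_cong s1 s2 ws1 ws2
  (fun x => toStar (CDeep l r d (la1 ++ fill k1' x :: mid) k2' ra2))
  (fun y => toStar (CDeep l r d la1 k1' (mid ++ fill k2' y :: ra2))) S1 S2 H1 H2.
rewrite wsubst_toStar; apply.
- move=> x wx; apply: star_toStar => /=; rewrite wl wr wk2 wra2 /=.
  move: ws2d wla2; rewrite !size_cat /= !all_cat /= => -> /and3P[-> _ ->].
  by have [_ ->] := wf_fill_core wk1 wx.
- move=> y wy; apply: star_toStar => /=; rewrite wl wr wk1 wla1 /=.
  move: ws1d wra1; rewrite !size_cat /= !all_cat /= => -> /and3P[-> _ ->].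
  by have [_ ->] := wf_fill_core wk2 wy.
- by move=> x y; rewrite !wsubst_toStar /= -!catA.
Qed.

(* Two top-level occurrences ws1 = b m and ws2 = m a overlapping in m:
   an inclusion if b is empty, a proper intersection otherwise. *)
Lemma top_overlap_cong (A F b m a : word) s1 s2 ws1 ws2 :
  wf_letters A -> wf_letters F -> S s1 -> S s2 -> is_lead lt s1 ws1 -> is_lead lt s2 ws2 ->
  ws1 = b ++ m -> ws2 = m ++ a -> (0 < size m)%N -> (0 < size a)%N ->
  cong (A ++ ws1 ++ a ++ F) (plsubst (toStar (CTop A (a ++ F))) s1)
       (plsubst (toStar (CTop (A ++ b) F)) s2).
Proof.
move=> wA wF S1 S2 H1 H2 E1 E2 m0 a0; subst ws1 ws2.
have w1 := lead_wf S1 H1; have w2 := lead_wf S2 H2.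
have wa : wf_word ar a by apply: (wf_suffix w2); rewrite /nilp -lt0n.
case: b H1 w1 => [|x b] H1 w1.
  have wk : wf_ctx ar (CTop A F) by rewrite /= wA wF.
  have wkin : wf_ctx ar (CTop [::] a) by case/andP: wa.
  have := including_cong wk wkin S2 S1 H2 H1 (erefl (fill (CTop [::] a) m)).
  by rewrite /= cats0 -!catA => /cong_sym.
have wb : wf_word ar (x :: b) by apply: (wf_prefix w1).
have := intersection_cong wA wF S1 S2 H1 H2 wa wb (_ : _ ++ a = (x :: b) ++ m ++ a).
rewrite -!catA; apply=> //.
rewrite !size_cat /= !addSn ltnS -!addnA ltn_add2l.
by rewrite -[X in (X < _)%N]add0n ltn_add2r.
Qed.

(* k1 is a top-level context A * C whose left part is not longer than that of
   k2: \bar s1 lies left of the core of k2, contains it, or overlaps it. *)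
Lemma top_left_cong (A C : word) (k2 : ctx O X) s1 s2 ws1 ws2 :
  wf_ctx ar (CTop A C) -> wf_ctx ar k2 ->
  S s1 -> S s2 -> is_lead lt s1 ws1 -> is_lead lt s2 ws2 ->
  fill (CTop A C) ws1 = fill k2 ws2 -> (size A <= size (cl k2))%N ->
  cong (fill (CTop A C) ws1) (plsubst (toStar (CTop A C)) s1) (plsubst (toStar k2) s2).
Proof.
move=> wk1 wk2 S1 S2 H1 H2 E Hle.
have /andP[wA wC] := wk1.
have E' : A ++ ws1 ++ C = cl k2 ++ core k2 ws2 ++ cr k2 by rewrite -fill_core -E.
have [b [Eb E1]] := cat_split E' Hle.
case: (leqP (size ws1) (size b)) => Hb.
  have [m [Em E2]] := cat_split E1 Hb.
  by apply: (separate_cong (m := m) (ws2 := ws2)); rewrite //= Eb Em.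
have [m [Em E3]] := cat_split (esym E1) (ltnW Hb).
have m0 : (0 < size m)%N by move: Hb; rewrite Em size_cat -ltn_subLR // subnn.
case: (leqP (size (core k2 ws2)) (size m)) => Hc.
  have [a [Ea E4]] := cat_split E3 Hc.
  have wb : wf_letters b by move: (wf_cl wk2); rewrite Eb all_cat => /andP[].
  have wa : wf_letters a by move: (wf_cr wk2); rewrite E4 all_cat => /andP[].
  have := including_cong wk1 (wf_setLR wk2 wb wa) S1 S2 H1 H2 (_ : ws1 = _).
  rewrite /= cl_setLR cr_setLR setLR_setLR -Eb -E4 setLR_id; apply.
  by rewrite fill_setLR Em Ea catA.
have [a [Ea E4]] := cat_split (esym E3) (ltnW Hc).
have a0 : (0 < size a)%N by move: Hc; rewrite Ea size_cat -ltn_subLR // subnn.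
case: k2 wk2 {E E' E1 E3 Hc Hle} Eb E4 Ea => [D F|l r d la k ra] wk2 /= Eb E4 Ea.
  by subst; apply: top_overlap_cong => //; case/andP: wk2.
by move: (leq_add m0 a0); rewrite -size_cat -Ea.
Qed.

Lemma top_cong (A C : word) (k2 : ctx O X) s1 s2 ws1 ws2 :
  wf_ctx ar (CTop A C) -> wf_ctx ar k2 ->
  S s1 -> S s2 -> is_lead lt s1 ws1 -> is_lead lt s2 ws2 ->
  fill (CTop A C) ws1 = fill k2 ws2 ->
  cong (fill (CTop A C) ws1) (plsubst (toStar (CTop A C)) s1) (plsubst (toStar k2) s2).
Proof.
move=> wk1 wk2 S1 S2 H1 H2 E.
case: (leqP (size A) (size (cl k2))) => H; first exact: (top_left_cong (ws2 := ws2)).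
case: k2 wk2 E H => [D F|l r d la k ra] wk2 E H.
  by rewrite E; apply: cong_sym; apply: (top_left_cong wk2 wk1 S2 S1 H2 H1 (esym E) (ltnW H)).
have [b [Eb E1]] := cat_split (esym E) (ltnW H).
case: b Eb E1 => [|x b] Eb E1; first by rewrite /= Eb cats0 ltnn in H.
case: E1 => Ex E1; subst x A.
rewrite E; apply: cong_sym.
by apply: (separate_cong (m := b) (ws2 := ws1)).
Qed.

(* Both stars below the same operation symbol at the same top-level place:
   either in different arguments, or in the same one, where the congruence
   for the inner contexts is carried through the outer context. *)
Lemma deep_cong l r d la1 (k1' : ctx O X) ra1 la2 k2' ra2 s1 s2 ws1 ws2 :
  wf_ctx ar (CDeep l r d la1 k1' ra1) -> wf_ctx ar (CDeep l r d la2 k2' ra2) ->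
  S s1 -> S s2 -> is_lead lt s1 ws1 -> is_lead lt s2 ws2 ->
  la1 ++ fill k1' ws1 :: ra1 = la2 ++ fill k2' ws2 :: ra2 ->
  (fill k1' ws1 = fill k2' ws2 ->
     cong (fill k1' ws1) (plsubst (toStar k1') s1) (plsubst (toStar k2') s2)) ->
  cong (fill (CDeep l r d la1 k1' ra1) ws1)
    (plsubst (toStar (CDeep l r d la1 k1' ra1)) s1)
    (plsubst (toStar (CDeep l r d la2 k2' ra2)) s2).
Proof.
move=> wk1 wk2 S1 S2 H1 H2 Eargs Hin.
case: (cat_cons_cases Eargs) => [[mid [E1 E2]]|[mid [E1 E2]]|[<- Ein <-]].
- by subst; apply: separate_args_cong.
- subst; have -> : fill (CDeep l r d (la2 ++ fill k2' ws2 :: mid) k1' ra1) ws1 =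
            fill (CDeep l r d la2 k2' (mid ++ fill k1' ws1 :: ra1)) ws2 by rewrite /= -catA.
  by apply: cong_sym; apply: separate_args_cong.
set kout := CDeep l r d la1 (CTop [::] [::]) ra1.
have fill_kout x : fill kout x = l ++ [:: PO d (la1 ++ x :: ra1)] ++ r by rewrite /= cats0.
move: wk1 wk2 => /and5P[wl wr wd wla /andP[wra wk1']] /and5P[_ _ _ _ /andP[_ wk2']].
have wkout : wf_ctx ar kout by rewrite /= wl wr wd wla wra.
have -> : fill (CDeep l r d la1 k1' ra1) ws1 = fill kout (fill k1' ws1) by rewrite fill_kout.
apply: (cong_in_context wkout _ (Hin Ein)).
  by have [_ ->] := wf_fill_core wk1' (lead_wf S1 H1).
by move=> g; rewrite !peval_plsubst; congr (_ - _);
  apply: eq_peval => y; rewrite !wsubst_toStar fill_kout.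
Qed.

Lemma ctx_cong (k1 : ctx O X) : forall k2 s1 s2 ws1 ws2,
  wf_ctx ar k1 -> wf_ctx ar k2 -> S s1 -> S s2 -> is_lead lt s1 ws1 -> is_lead lt s2 ws2 ->
  fill k1 ws1 = fill k2 ws2 ->
  cong (fill k1 ws1) (plsubst (toStar k1) s1) (plsubst (toStar k2) s2).
Proof.
elim: k1 => [A C|l1 r1 d1 la1 k1' IH ra1] k2 s1 s2 ws1 ws2 wk1 wk2 S1 S2 H1 H2 E.
  exact: (top_cong (ws2 := ws2)).
case: k2 wk2 E => [D F|l2 r2 d2 la2 k2' ra2] wk2 E.
  by rewrite E; apply: cong_sym; apply: (top_cong wk2 wk1 S2 S1 H2 H1 (esym E)).
have E' := E; rewrite /= in E'.
case: (cat_cons_cases E') => [[m [El Er]]|[m [El Er]]|[El [Ed Eargs] Er]].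
- exact: (separate_cong wk1 wk2 S1 S2 H1 H2 El Er).
- by rewrite E; apply: cong_sym; apply: (separate_cong wk2 wk1 S2 S1 H2 H1 El Er).
subst l2 d2 r2; apply: (deep_cong wk1 wk2 S1 S2 H1 H2 Eargs) => Ein.
have /and5P[_ _ _ _ /andP[_ wk1']] := wk1; have /and5P[_ _ _ _ /andP[_ wk2']] := wk2.
exact: (IH k2' s1 s2 ws1 ws2 wk1' wk2' S1 S2 H1 H2 Ein).
Qed.

End Congruence.

Unset Implicit Arguments.

Theorem lemma3p3 (K : comPzRingType) (X O : eqType) (ar : O -> nat)
  (Har : forall d, (0 < ar d)%N)
  (lt : oword O X -> oword O X -> Prop) (Hlt : monomial_order ar lt)
  (S : opoly O X K -> Prop)
  (HSwf : forall s, S s -> wf_poly ar s)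
  (HSmon : forall s, S s -> omonic lt s)
  (HGSB : GSbasis ar lt S)
  (u1 u2 : oword O (option X)) (s1 s2 : opoly O X K) (w ws1 ws2 : oword O X) :
  is_star_word ar u1 -> is_star_word ar u2 -> S s1 -> S s2 ->
  is_lead lt s1 ws1 -> is_lead lt s2 ws2 ->
  w = wsubst u1 ws1 -> w = wsubst u2 ws2 ->
  cong_mod ar lt S w (plsubst u1 s1) (plsubst u2 s2).
Proof.
move=> /star_ctx [k1 [wk1 ->]] /star_ctx [k2 [wk2 ->]] S1 S2 H1 H2.
rewrite !wsubst_toStar => -> E.
exact: (ctx_cong Hlt HSwf HSmon HGSB wk1 wk2 S1 S2 H1 H2 E).
Qed.
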